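(* Let $(\mathcal{X},c)$ be a metric space with diameter at most $1$, let $\mu,\nu$ be probability distributions on $\mathcal{X}$, and let $p\ge 1$, $k\ge 0$. Suppose $W_{p,1-\alpha}(\mu,\nu)=k\beta$ for some $\alpha\in[0,1]$ and $\beta\ge 0$. Then $\mathrm{RPW}_{p,k}(\mu,\nu)\le\max\{\alpha,\beta\}$. Furthermore, if $k\neq 0$, then $\mathrm{RPW}_{p,k}(\mu,\nu)\ge\min\{\alpha,\beta\}$.
   Context: $(\mathcal{X},c)$ is a metric space with $c(x,y)\le 1$ for all $x,y$; distributions are Borel probability measures. For $p\in[1,\infty)$ and $\alpha\in[0,1]$, a partial transport plan of mass $\alpha$ between $\mu$ and $\nu$ is a nonnegative measure $\gamma$ on $\mathcal{X}\times\mathcal{X}$ of total mass $\alpha$ with first marginal $\le\mu$ and second marginal $\le\nu$ (setwise); its cost is $w_p(\gamma)=(\int c^p\,d\gamma)^{1/p}$. $W_{p,\alpha}(\mu,\nu)$ is the infimum of $w_p(\gamma)$ over such $\gamma$. For $k\ge0$, $\mathrm{RPW}_{p,k}(\mu,\nu)=\inf\{\varepsilon\in[0,1]: W_{p,1-\varepsilon}(\mu,\nu)\le k\varepsilon\}$. *)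

From HB Require Import structures.
From mathcomp Require Import all_boot all_order all_algebra.
From mathcomp Require Import all_classical all_reals all_analysis.
Set Implicit Arguments. Unset Strict Implicit. Unset Printing Implicit Defensive.
Import Order.TTheory GRing.Theory Num.Theory.
Local Open Scope classical_set_scope.
Local Open Scope ring_scope.

Definition bounded_metric {R : realType} {T : Type} (c : T -> T -> R) : Prop :=
  [/\ forall x y, 0 <= c x y,
      forall x y, c x y = 0 <-> x = y,
      forall x y, c x y = c y x,
      forall x y z, c x z <= c x y + c y z
    & forall x y, c x y <= 1].

Definition c_open {R : realType} {T : Type} (c : T -> T -> R) (A : set T) : Prop :=
  forall x, A x -> exists r : R, 0 < r /\ [set y | c x y < r] `<=` A.

Definition borel_for {R : realType} {d : measure_display} {T : measurableType d}
  (c : T -> T -> R) : Prop :=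
  @measurable d T = <<s [set A | c_open c A] >>.

Definition partial_plan {R : realType} {d : measure_display} {T : measurableType d}
  (a : R) (mu nu : {measure set T -> \bar R})
  (g : {measure set (T * T) -> \bar R}) : Prop :=
  [/\ g setT = a%:E,
      forall A, measurable A -> g (A `*` setT) <= mu A
    & forall A, measurable A -> g (setT `*` A) <= nu A]%E.

Definition wp {R : realType} {d : measure_display} {T : measurableType d}
  (c : T -> T -> R) (p : R) (g : {measure set (T * T) -> \bar R}) : \bar R :=
  poweR (\int[g]_z ((c z.1 z.2) `^ p)%:E)%E p^-1.

Definition Wpa {R : realType} {d : measure_display} {T : measurableType d}
  (c : T -> T -> R) (p a : R) (mu nu : {measure set T -> \bar R}) : \bar R :=
  ereal_inf [set wp c p g | g in [set g | partial_plan a mu nu g]].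

Definition RPW {R : realType} {d : measure_display} {T : measurableType d}
  (c : T -> T -> R) (p k : R) (mu nu : {measure set T -> \bar R}) : R :=
  inf [set e : R | 0 <= e <= 1 /\ (Wpa c p (1 - e) mu nu <= (k * e)%:E)%E].

From HB Require Import structures.
From mathcomp Require Import all_boot all_order all_algebra.
From mathcomp Require Import all_classical all_reals all_analysis.
Import Order.TTheory GRing.Theory Num.Theory.
Local Open Scope classical_set_scope.
Local Open Scope ring_scope.

(* Scaling a partial plan of mass b by a / b <= 1 gives a partial plan of mass
   a with no larger cost, so W_{p,a} is nondecreasing in the mass a, and the
   empty plan gives W_{p,0} = 0.  Hence the set of feasible eps in the
   definition of RPW is an up-closed subset of [0, 1] containing 1: eps =
   max(alpha, beta) is feasible (or exceeds 1), while for eps < min(alpha,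
   beta) we get W_{p,1-eps} >= W_{p,1-alpha} = k beta > k eps. *)

Section ge0_le_measure_integralT.
Local Open Scope ereal_scope.
Context {d : measure_display} {T : measurableType d} {R : realType}.
Variables m1 m2 : {measure set T -> \bar R}.
Hypothesis m12 : forall A, measurable A -> m1 A <= m2 A.

Import HBNNSimple.

Lemma ge0_le_measure_integralT (f : T -> \bar R) : (forall x, 0 <= f x) ->
  \int[m1]_x f x <= \int[m2]_x f x.
Proof.
move=> f0; rewrite !ge0_integralTE// ge_ereal_sup// => _ [h hf <-].
by apply: le_ereal_sup_tmp; exists (sintegral m2 h);
  [exists h | exact: le_measure_sintegral].
Qed.

End ge0_le_measure_integralT.

Definition RPW_feasible {R : realType} {d : measure_display}
    {T : measurableType d} (c : T -> T -> R) (p k : R)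
    (mu nu : {measure set T -> \bar R}) (e : R) : Prop :=
  0 <= e <= 1 /\ (Wpa c p (1 - e) mu nu <= (k * e)%:E)%E.

Section partial_transport.
Context {R : realType} {d : measure_display} {T : measurableType d}.
Context {c : T -> T -> R} {p : R} {mu nu : {measure set T -> \bar R}}.
Hypothesis p_gt0 : 0 < p.

Lemma mscale_le {r : {nonneg R}} {g : {measure set (T * T) -> \bar R}} A :
  r%:num <= 1 -> (mscale r g A <= g A)%E.
Proof. by move=> r1; rewrite /mscale/= gee_pMl// lee_fin. Qed.

Lemma partial_plan_mscale {b : R} {r : {nonneg R}}
    {g : {measure set (T * T) -> \bar R}} :
  r%:num <= 1 -> partial_plan b mu nu g ->
  partial_plan (r%:num * b) mu nu (mscale r g).
Proof.
move=> r1 [gT gmu gnu]; split => [|A mA|A mA].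
- by rewrite /= /mscale/= gT -EFinM.
- by apply: le_trans (gmu A mA); apply: mscale_le.
- by apply: le_trans (gnu A mA); apply: mscale_le.
Qed.

Lemma wp_mscale_le {r : {nonneg R}} {g : {measure set (T * T) -> \bar R}} :
  r%:num <= 1 -> (wp c p (mscale r g) <= wp c p g)%E.
Proof.
move=> r1; have cp_ge0 (m : {measure set (T * T) -> \bar R}) :
    (\int[m]_z ((c z.1 z.2) `^ p)%:E \in `[0, +oo])%E.
  rewrite in_itv/= leey andbT integral_ge0// => z _.
  by rewrite lee_fin powR_ge0.
apply: gt0_ler_poweR; rewrite ?cp_ge0 ?invr_ge0 ?(ltW p_gt0)//.
apply: ge0_le_measure_integralT => [A _|z]; first exact: mscale_le.
by rewrite lee_fin powR_ge0.
Qed.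

Lemma Wpa0_le0 : (Wpa c p 0 mu nu <= 0)%E.
Proof.
have plan0 : partial_plan 0 mu nu (@mzero _ (T * T)%type R).
  by split => [|A _|A _]; rewrite ?measure_ge0.
apply: le_trans (ereal_inf_lbound (ex_intro2 _ _ _ plan0 erefl)) _.
by rewrite /wp integral_measure_zero poweR0r// invr_neq0// gt_eqF.
Qed.

Lemma le_Wpa (a b : R) : 0 <= a -> a <= b ->
  (Wpa c p a mu nu <= Wpa c p b mu nu)%E.
Proof.
move=> a_ge0 ab; have [b_le0|b_gt0] := leP b 0.
  by have -> : a = b by apply/le_anti; rewrite ab (le_trans b_le0 a_ge0).
apply: le_ereal_inf_tmp => _ [g plan_g <-].
pose r : {nonneg R} := NngNum (divr_ge0 a_ge0 (ltW b_gt0)).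
have r1 : r%:num <= 1 by rewrite ler_pdivrMr// mul1r.
have plan_rg := partial_plan_mscale r1 plan_g.
rewrite /= divfK ?gt_eqF// in plan_rg.
exact: le_trans (ereal_inf_lbound (ex_intro2 _ _ _ plan_rg erefl))
  (wp_mscale_le r1).
Qed.

Context {k : R}.
Hypothesis k_ge0 : 0 <= k.

Lemma RPW_feasible1 : RPW_feasible c p k mu nu 1.
Proof. by split; rewrite ?ler01 ?lexx// subrr (le_trans Wpa0_le0)// mulr1. Qed.

Lemma RPW_le {e : R} : RPW_feasible c p k mu nu e -> RPW c p k mu nu <= e.
Proof. by move=> fe; apply: ge_inf => //; exists 0 => x [/andP[]]. Qed.

Lemma RPW_ge (m : R) : (forall e, RPW_feasible c p k mu nu e -> m <= e) ->
  m <= RPW c p k mu nu.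
Proof.
by move=> lb; apply: lb_le_inf => //; exists 1; apply: RPW_feasible1.
Qed.

Context {alpha beta : R}.
Hypotheses (alpha_ge0 : 0 <= alpha) (alpha_le1 : alpha <= 1).
Hypothesis beta_ge0 : 0 <= beta.
Hypothesis W_alpha : Wpa c p (1 - alpha) mu nu = (k * beta)%:E.

Lemma RPW_le_max : RPW c p k mu nu <= Num.max alpha beta.
Proof.
have [beta_le_alpha|alpha_lt_beta] := leP beta alpha.
  apply: RPW_le; split; first by rewrite alpha_ge0 alpha_le1.
  by rewrite W_alpha lee_fin ler_wpM2l.
have [beta_le1|beta_gt1] := leP beta 1.
  apply: RPW_le; split; first by rewrite beta_ge0 beta_le1.
  by rewrite -W_alpha; apply: le_Wpa; rewrite ?subr_ge0// lerB// ltW.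
exact: le_trans (RPW_le RPW_feasible1) (ltW beta_gt1).
Qed.

Lemma RPW_ge_min : k != 0 -> Num.min alpha beta <= RPW c p k mu nu.
Proof.
move=> k_neq0; have k_gt0 : 0 < k by rewrite lt0r k_neq0.
apply: RPW_ge => e [/andP[_ e_le1] We]; rewrite leNgt lt_min.
apply/negP => /andP[e_lt_alpha e_lt_beta].
have W_le : (Wpa c p (1 - alpha) mu nu <= Wpa c p (1 - e) mu nu)%E.
  by apply: le_Wpa; rewrite ?subr_ge0// lerB// ltW.
have := le_trans W_le We.
by rewrite W_alpha lee_fin ler_pM2l// leNgt e_lt_beta.
Qed.

End partial_transport.

Theorem lemma2p2 (R : realType) (d : measure_display) (T : measurableType d)
  (c : T -> T -> R) (hc : bounded_metric c) (hborel : borel_for c)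
  (mu nu : probability T R) (p k alpha beta : R)
  (hp : 1 <= p) (hk : 0 <= k) (ha : 0 <= alpha <= 1) (hb : 0 <= beta)
  (hW : Wpa c p (1 - alpha) mu nu = (k * beta)%:E) :
  RPW c p k mu nu <= Num.max alpha beta /\
  (k != 0 -> Num.min alpha beta <= RPW c p k mu nu).
Proof.
have p_gt0 : 0 < p := lt_le_trans ltr01 hp.
case/andP: ha => a_ge0 a_le1.
split; first exact: (RPW_le_max p_gt0 hk a_ge0 a_le1 hb hW).
exact: (RPW_ge_min p_gt0 hk a_le1 hW).
Qed.
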